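(* $\bm M\succeq\bm 0$, $\bm M_K\succeq\bm 0$, $\bm H\succ\bm 0$ and $\bm H_K\succ\bm 0$.
   Context: Let $\bm X=(\bm X_1,\dots,\bm X_K)\in\mathbb R^{n\times p}$ with $\bm X_i\in\mathbb R^{n\times p_i}$, $\bm A=\bm X^\top\bm X=(\bm A_1,\dots,\bm A_K)$, $\bm A_i=\bm X^\top\bm X_i$, and $\mu>0$. Let $\bm S=\eta\bm I_p-\mu\bm A^\top\bm A$ with $\eta$ larger than the largest eigenvalue of $\mu\bm A^\top\bm A$, and $\bm S_i'=\eta_i\bm I_{p_i}-\mu\bm A_i^\top\bm A_i$ with $\eta_i$ larger than the largest eigenvalue of $\mu\bm A_i^\top\bm A_i$. Define $\bm M=\begin{pmatrix}\mu\bm A^\top\bm A&\bm 0&\bm A^\top\\\bm 0&\mu\bm I_p&-\bm I_p\\\bm A&-\bm I_p&\frac{2}{\mu}\bm I_p\end{pmatrix}$, $\bm H=\begin{pmatrix}\mu\bm A^\top\bm A+\bm S&\bm 0&\bm A^\top\\\bm 0&\mu\bm I_p&-\bm I_p\\\bm A&-\bm I_p&\frac{2}{\mu}\bm I_p\end{pmatrix}$, $\bm M_K=\begin{pmatrix}\bm\Lambda_K&\bm G^\top\\\bm G&\frac{K+1}{\mu}\bm I_p\end{pmatrix}$, $\bm H_K=\begin{pmatrix}\tilde{\bm\Lambda}_K&\bm G^\top\\\bm G&\frac{K+1}{\mu}\bm I_p\end{pmatrix}$, where $\bm G=(\bm A_1,\dots,\bm A_K,-\bm I_p)$, $\bm\Lambda_K=\mathrm{diag}(\mu\bm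 A_1^\top\bm A_1,\dots,\mu\bm A_K^\top\bm A_K,\mu\bm I_p)$, $\tilde{\bm\Lambda}_K=\mathrm{diag}(\mu\bm A_1^\top\bm A_1+\bm S_1',\dots,\mu\bm A_K^\top\bm A_K+\bm S_K',\mu\bm I_p)=\mathrm{diag}(\eta_1\bm I_{p_1},\dots,\eta_K\bm I_{p_K},\mu\bm I_p)$. $\succeq\bm 0$ means positive semidefinite, $\succ\bm 0$ positive definite. *)

From HB Require Import structures.
From mathcomp Require Import all_boot all_order all_algebra.
Set Implicit Arguments. Unset Strict Implicit. Unset Printing Implicit Defensive.
Import Order.TTheory GRing.Theory Num.Theory.
Local Open Scope ring_scope.

Section Defs.
Variable R : rcfType.

Definition psd m (A : 'M[R]_m) : Prop :=
  A^T = A /\ forall x : 'cV[R]_m, 0 <= (x^T *m A *m x) ord0 ord0.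
Definition pd m (A : 'M[R]_m) : Prop :=
  A^T = A /\ forall x : 'cV[R]_m, x != 0 -> 0 < (x^T *m A *m x) ord0 ord0.

Definition block3 p (B11 B12 B13 B21 B22 B23 B31 B32 B33 : 'M[R]_p)
  : 'M[R]_(p + p + p) :=
  block_mx (block_mx B11 B12 B21 B22) (col_mx B13 B23) (row_mx B31 B32) B33.

Variables (K n : nat) (pp : 'I_K -> nat).
Variable Xs : forall i : 'I_K, 'M[R]_(n, pp i).

Definition Xfull : 'M[R]_(n, \sum_i pp i) := \mxrow_(i < K) Xs i.
Definition Amat : 'M[R]_(\sum_i pp i) := Xfull^T *m Xfull.
Definition Ablk (i : 'I_K) : 'M[R]_(\sum_i pp i, pp i) := Xfull^T *m Xs i.

Definition Smat (mu eta : R) : 'M[R]_(\sum_i pp i) :=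
  eta%:M - mu *: (Amat^T *m Amat).
Definition Sblk (mu : R) (etas : 'I_K -> R) (i : 'I_K) : 'M[R]_(pp i) :=
  (etas i)%:M - mu *: ((Ablk i)^T *m Ablk i).

Definition Mmat (mu : R) :=
  block3 (mu *: (Amat^T *m Amat)) 0 Amat^T
         0 (mu%:M) (- 1%:M)
         Amat (- 1%:M) ((2 / mu)%:M).
Definition Hmat (mu eta : R) :=
  block3 (mu *: (Amat^T *m Amat) + Smat mu eta) 0 Amat^T
         0 (mu%:M) (- 1%:M)
         Amat (- 1%:M) ((2 / mu)%:M).

Definition Gmat : 'M[R]_(\sum_i pp i, \sum_i pp i + \sum_i pp i) :=
  row_mx (\mxrow_(i < K) Ablk i) (- 1%:M).
Definition LambdaK (mu : R) : 'M[R]_(\sum_i pp i + \sum_i pp i) :=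
  block_mx (\mxdiag_(i < K) (mu *: ((Ablk i)^T *m Ablk i))) 0 0 (mu%:M).
Definition LambdaKt (mu : R) (etas : 'I_K -> R) : 'M[R]_(\sum_i pp i + \sum_i pp i) :=
  block_mx (\mxdiag_(i < K) (mu *: ((Ablk i)^T *m Ablk i) + Sblk mu etas i)) 0 0 (mu%:M).
Definition MKmat (mu : R) :=
  block_mx (LambdaK mu) Gmat^T Gmat (((K.+1)%:R / mu)%:M).
Definition HKmat (mu : R) (etas : 'I_K -> R) :=
  block_mx (LambdaKt mu etas) Gmat^T Gmat (((K.+1)%:R / mu)%:M).
End Defs.

From HB Require Import structures.
From mathcomp Require Import all_boot all_order all_algebra.
From mathcomp Require Import ring complex.
Import Order.TTheory GRing.Theory Num.Theory.
Set Implicit Arguments. Unset Strict Implicit. Unset Printing Implicit Defensive.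
Local Open Scope ring_scope.

(* Completing the square in z writes the quadratic forms of M and M_K as sums of squares,
     q_M(x, y, z)     = mu |A x + z / mu|^2 + mu |y - z / mu|^2,
     q_MK(u, w, z)    = sum_i mu |A_i u_i + z / mu|^2 + mu |w - z / mu|^2,
   so both are positive semidefinite.  H and H_K add to them the block S (resp.
   diag(S_i')) in the upper-left corner; it is positive definite because it is
   symmetric with eigenvalues eta - lambda > 0 (spectral theorem for the Hermitian
   complexification).  A vector killed by both forms has a zero first block, and the
   squares then force z = 0 and y = 0 (resp. w = 0). *)

Lemma cV_neq0_coord (V : nmodType) m (z : 'cV[V]_m) :
  z != 0 -> exists j, z j 0 != 0.
Proof.
move=> z_neq0; apply/existsP; apply: contraNT z_neq0 => /existsPn z0.
by apply/eqP/matrixP => j k; rewrite ord1 mxE; apply/eqP/negbNE/z0.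
Qed.

Section NormalForm.
Variable C : numClosedFieldType.
Local Open Scope sesquilinear_scope.

Lemma spectral_diag_eigenvalue n (A : 'M[C]_n) j :
  A \is normalmx -> eigenvalue A (spectral_diag A 0 j).
Proof.
move=> /orthomx_spectralP; set P := spectralmx A; set d := spectral_diag A => A_eq.
have P_unit : P \in unitmx := spectral_unit A.
apply/eigenvalueP; exists (row j P).
  rewrite -row_mul [in LHS]A_eq !mulmxA mulmxV // mul1mx mul_diag_mx.
  by apply/rowP => k; rewrite !mxE.
rewrite rowE; apply: contraTneq isT => /(congr1 (mulmx^~ (invmx P))).
rewrite mulmxK // mul0mx => /matrixP/(_ 0 j)/eqP.
by rewrite !mxE !eqxx oner_eq0.
Qed.

Lemma normalmx_form_spectral n (A : 'M[C]_n) (x : 'cV[C]_n) : A \is normalmx ->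
  (x^t* *m A *m x) 0 0 =
  \sum_j spectral_diag A 0 j * `|(spectralmx A *m x) j 0| ^+ 2.
Proof.
move=> /orthomx_spectralP A_eq.
rewrite {1}A_eq invmx_unitary ?spectral_unitarymx // !mulmxA.
rewrite -map_mxM -trmx_mul -[_ *m _ *m x]mulmxA mxE.
apply: eq_bigr => j _; rewrite mul_mx_diag !mxE normCKC; ring.
Qed.

Lemma normalmx_form_gt0 n (A : 'M[C]_n) (x : 'cV[C]_n) : A \is normalmx ->
  (forall j, 0 < spectral_diag A 0 j) -> x != 0 -> 0 < (x^t* *m A *m x) 0 0.
Proof.
move=> A_normal d_gt0 x_neq0; rewrite normalmx_form_spectral //.
set y := spectralmx A *m x.
have [j yj_neq0] : exists j, y j 0 != 0.
  apply: cV_neq0_coord; apply: contraNneq x_neq0 => y0.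
  by rewrite -(mulKmx (spectral_unit A) x) -/y y0 mulmx0.
rewrite (bigD1 j) //= ltr_pwDl ?mulr_gt0 ?exprn_gt0 ?normr_gt0 //.
by apply: sumr_ge0 => i _; apply: mulr_ge0; [exact: ltW | exact: exprn_ge0].
Qed.

End NormalForm.

Section DotProduct.
Variable R : rcfType.
Implicit Types (m : nat).

Definition dot m (a b : 'cV[R]_m) : R := (a^T *m b) 0 0.

Lemma qf_dot m (A : 'M[R]_m) x : (x^T *m A *m x) 0 0 = dot x (A *m x).
Proof. by rewrite /dot mulmxA. Qed.

Lemma dotC m (a b : 'cV[R]_m) : dot a b = dot b a.
Proof.
have -> : dot a b = (a^T *m b)^T 0 0 by rewrite mxE.
by rewrite trmx_mul trmxK.
Qed.

Lemma dotDr m (a b c : 'cV[R]_m) : dot a (b + c) = dot a b + dot a c.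
Proof. by rewrite /dot mulmxDr mxE. Qed.

Lemma dotZr m k (a b : 'cV[R]_m) : dot a (k *: b) = k * dot a b.
Proof. by rewrite /dot -scalemxAr mxE. Qed.

Lemma dotNr m (a b : 'cV[R]_m) : dot a (- b) = - dot a b.
Proof. by rewrite /dot mulmxN mxE. Qed.

Lemma dotDl m (a b c : 'cV[R]_m) : dot (a + b) c = dot a c + dot b c.
Proof. by rewrite dotC dotDr !(dotC c). Qed.

Lemma dotZl m k (a b : 'cV[R]_m) : dot (k *: a) b = k * dot a b.
Proof. by rewrite dotC dotZr dotC. Qed.

Lemma dotNl m (a b : 'cV[R]_m) : dot (- a) b = - dot a b.
Proof. by rewrite dotC dotNr dotC. Qed.

Lemma dot0r m (a : 'cV[R]_m) : dot a 0 = 0.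
Proof. by rewrite /dot mulmx0 mxE. Qed.

Lemma dot_suml m (I : finType) (a : I -> 'cV[R]_m) b :
  dot (\sum_i a i) b = \sum_i dot (a i) b.
Proof. by rewrite /dot raddf_sum mulmx_suml summxE. Qed.

Lemma dot_trmx m k (B : 'M[R]_(m, k)) a b : dot a (B *m b) = dot (B^T *m a) b.
Proof. by rewrite /dot trmx_mul trmxK mulmxA. Qed.

Lemma dot_scalar_mx m k (a b : 'cV[R]_m) : dot a (k%:M *m b) = k * dot a b.
Proof. by rewrite mul_scalar_mx dotZr. Qed.

Lemma dot_ge0 m (a : 'cV[R]_m) : 0 <= dot a a.
Proof. by rewrite /dot mxE sumr_ge0 // => j _; rewrite mxE -expr2 sqr_ge0. Qed.

Lemma mulr_dot_ge0 c m (a : 'cV[R]_m) : 0 <= c -> 0 <= c * dot a a.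
Proof. by move=> c_ge0; rewrite mulr_ge0 ?dot_ge0. Qed.

Lemma dot_eq0 m (a : 'cV[R]_m) : (dot a a == 0) = (a == 0).
Proof.
apply/eqP/eqP => [|->]; last exact: dot0r.
have sq_ge0 j : 0 <= a^T 0 j * a j 0 by rewrite mxE -expr2 sqr_ge0.
rewrite /dot mxE => /(psumr_eq0P (fun j _ => sq_ge0 j)) a0.
apply/matrixP => i j; rewrite ord1 mxE.
by have /eqP := a0 i isT; rewrite mxE mulf_eq0 orbb => /eqP.
Qed.

Lemma dot_col m k (a1 b1 : 'cV[R]_m) (a2 b2 : 'cV[R]_k) :
  dot (col_mx a1 a2) (col_mx b1 b2) = dot a1 b1 + dot a2 b2.
Proof. by rewrite /dot tr_col_mx mul_row_col mxE. Qed.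

Lemma dot_block m k (x1 y1 : 'cV[R]_m) (x2 y2 : 'cV[R]_k) A B C D :
  dot (col_mx x1 x2) (block_mx A B C D *m col_mx y1 y2) =
  dot x1 (A *m y1) + dot x1 (B *m y2) + dot x2 (C *m y1) + dot x2 (D *m y2).
Proof. by rewrite mul_block_col dot_col !dotDr !addrA. Qed.

Lemma dot_mxcol (K : nat) (p_ : 'I_K -> nat) (a b : forall i, 'cV[R]_(p_ i)) :
  dot (\mxcol_i a i) (\mxcol_i b i) = \sum_i dot (a i) (b i).
Proof. by rewrite /dot tr_mxcol mul_mxrow_mxcol summxE. Qed.

Lemma trmx_scaled_gram m k c (B : 'M[R]_(m, k)) : (c *: (B^T *m B))^T = c *: (B^T *m B).
Proof. by rewrite linearZ /= trmx_mul trmxK. Qed.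

End DotProduct.

Section Definiteness.
Variable R : rcfType.
Implicit Types (m k l : nat).
Local Notation toC := (real_complex R).
Local Open Scope sesquilinear_scope.

Lemma pd_sym_eigenvalue_gt0 m (S : 'M[R]_m) :
  S^T = S -> (forall r, eigenvalue S r -> 0 < r) -> pd S.
Proof.
move=> S_sym S_pos; split=> // x x_neq0.
have toC_real r : toC r \is Num.real by apply/complex_realP; exists r.
have SC_herm : map_mx toC S \is hermsymmx.
  apply: realsym_hermsym; last by apply/mxOverP => i j; rewrite mxE.
  by apply/is_hermitianmxP; rewrite expr0 scale1r map_trmx S_sym map_mx_id.
have x_conj : (map_mx toC x)^T = (map_mx toC x)^t*.
  by apply/matrixP => i j; rewrite !mxE conj_Creal.
rewrite -ltcR rmorph0.
have -> : toC ((x^T *m S *m x) 0 0) =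
    ((map_mx toC x)^t* *m map_mx toC S *m map_mx toC x) 0 0.
  by rewrite -x_conj map_trmx -!map_mxM [RHS]mxE.
apply: (@normalmx_form_gt0 R[i]); first exact: hermitian_normalmx.
- move=> j.
  have /mxOverP/(_ 0 j)/complex_realP [r d_r] := hermitian_spectral_diag_real SC_herm.
  rewrite d_r ltcR; apply: S_pos.
  have : eigenvalue (map_mx toC S) (toC r).
    by rewrite -d_r; apply/spectral_diag_eigenvalue/hermitian_normalmx.
  by rewrite eigenvalue_map.
- by rewrite map_mx_eq0.
Qed.

Lemma pd_psd m (A : 'M[R]_m) : pd A -> psd A.
Proof.
case=> A_sym A_pos; split=> // x.
by have [->|/A_pos/ltW//] := eqVneq x 0; rewrite mulmx0 mxE.
Qed.

Lemma pd_add_psd m (A B : 'M[R]_m) : psd A -> psd B ->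
  (forall x, dot x (A *m x) = 0 -> dot x (B *m x) = 0 -> x = 0) -> pd (A + B).
Proof.
move=> [A_sym A_ge0] [B_sym B_ge0] AB_ker.
split=> [|x x_neq0]; first by rewrite linearD /= A_sym B_sym.
have := A_ge0 x; have := B_ge0 x; rewrite !qf_dot mulmxDl dotDr => qB qA.
rewrite lt_def addr_ge0 // paddr_eq0 // andbT.
by apply: contraNN x_neq0 => /andP[/eqP qA0 /eqP qB0]; rewrite (AB_ker x qA0 qB0).
Qed.

Lemma dot_block_ul m k (A : 'M[R]_m) (x : 'cV_m) (y : 'cV_k) :
  dot (col_mx x y) (block_mx A 0 0 0 *m col_mx x y) = dot x (A *m x).
Proof. by rewrite dot_block !mul0mx !dot0r !addr0. Qed.

Lemma psd_block_ul m k (A : 'M[R]_m) : psd A -> psd (block_mx A 0 0 (0 : 'M_k)).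
Proof.
case=> A_sym A_ge0; split=> [|v]; first by rewrite tr_block_mx A_sym !trmx0.
by rewrite -[v]vsubmxK qf_dot dot_block_ul -qf_dot.
Qed.

Lemma pd_mxdiag (K : nat) (p_ : 'I_K -> nat) (B : forall i, 'M[R]_(p_ i)) :
  (forall i, pd (B i)) -> pd (\mxdiag_i B i).
Proof.
move=> B_pd; split=> [|v v_neq0].
  by rewrite tr_mxdiag; apply: eq_mxdiag => i; case: (B_pd i).
have [j vj_neq0] : exists j, submxcol v j != 0.
  apply/existsP; apply: contraNT v_neq0 => /existsPn v0.
  rewrite -(submxcolK v) -(mxcol0 (p_ := p_) 1); apply/eqP/eq_mxcol => i.
  exact/eqP/negbNE/v0.
rewrite qf_dot -[v]submxcolK mul_mxdiag_mxcol dot_mxcol (bigD1 j) //=.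
rewrite ltr_pwDl -?qf_dot ?(B_pd j).2 // sumr_ge0 // => i _.
by rewrite -qf_dot (pd_psd (B_pd i)).2.
Qed.

Lemma pd_add_block_ul m k l (M : 'M[R]_(m + k + l)) (S : 'M[R]_m) :
  psd M -> pd S ->
  (forall y z, dot (col_mx (col_mx 0 y) z) (M *m col_mx (col_mx 0 y) z) = 0 ->
     y = 0 /\ z = 0) ->
  pd (M + block_mx (block_mx S 0 0 0) 0 0 0).
Proof.
move=> M_psd S_pd M_ker; apply: pd_add_psd => //.
  exact/psd_block_ul/psd_block_ul/pd_psd.
move=> v; rewrite -[v]vsubmxK -[usubmx v]vsubmxK !dot_block_ul.
set x := usubmx (usubmx v) => Mv0 Sx0.
have [x0|/S_pd.2] := eqVneq x 0; last by rewrite qf_dot Sx0 ltxx.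
by move: Mv0; rewrite x0 => /M_ker[-> ->]; rewrite !col_mx0.
Qed.

Lemma pd_scalar_subr m (B : 'M[R]_m) (a : R) : B^T = B ->
  (forall r, eigenvalue B r -> r < a) -> pd (a%:M - B).
Proof.
move=> B_sym B_lt; apply: pd_sym_eigenvalue_gt0.
  by rewrite linearB /= tr_scalar_mx B_sym.
move=> r /eigenvalueP[v v_eig v_neq0].
suff /B_lt : eigenvalue B (a - r) by rewrite gtrBl.
apply/eigenvalueP; exists v => //.
by move: v_eig; rewrite mulmxBr mul_mx_scalar scalerBl => <-; rewrite opprB addrC subrK.
Qed.

End Definiteness.

Section BlockMatrices.
Variables (R : rcfType) (K n : nat) (pp : 'I_K -> nat).
Variable Xs : forall i : 'I_K, 'M[R]_(n, pp i).
Implicit Types (mu eta : R) (x y z u w : 'cV[R]_(\sum_i pp i)).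

Lemma trmx_Amat : (Amat Xs)^T = Amat Xs.
Proof. by rewrite /Amat trmx_mul trmxK. Qed.

Lemma trmx_Mmat mu : (Mmat Xs mu)^T = Mmat Xs mu.
Proof.
rewrite /Mmat /block3 !tr_block_mx tr_col_mx tr_row_mx trmx_scaled_gram !trmx_Amat.
by rewrite !trmx0 !tr_scalar_mx linearN /= tr_scalar_mx.
Qed.

Lemma trmx_MKmat mu : (MKmat Xs mu)^T = MKmat Xs mu.
Proof.
rewrite /MKmat tr_block_mx trmxK /LambdaK tr_block_mx tr_mxdiag !trmx0 !tr_scalar_mx.
by under eq_mxdiag do rewrite trmx_scaled_gram.
Qed.

Lemma Mmat_dot mu x y z : mu != 0 ->
  dot (col_mx (col_mx x y) z) (Mmat Xs mu *m col_mx (col_mx x y) z) =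
  mu * dot (Amat Xs *m x + mu^-1 *: z) (Amat Xs *m x + mu^-1 *: z)
  + mu * dot (y - mu^-1 *: z) (y - mu^-1 *: z).
Proof.
move=> mu_neq0; rewrite /Mmat /block3 dot_block dot_block !mul_col_mx !dot_col.
rewrite !mul_row_col !dotDr !mul0mx !dot0r !dot_scalar_mx !mulNmx !mul1mx !dotNr.
rewrite -!scalemxAl !dotZr -mulmxA !(dot_trmx (Amat Xs)^T) trmxK.
rewrite !(dotDl, dotDr, dotNl, dotNr, dotZl, dotZr) (dotC z) (dotC z y).
by field.
Qed.

Lemma MKmat_dot mu u w z : mu != 0 ->
  dot (col_mx (col_mx u w) z) (MKmat Xs mu *m col_mx (col_mx u w) z) =
  \sum_i mu * dot (Ablk Xs i *m submxcol u i + mu^-1 *: z)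
                  (Ablk Xs i *m submxcol u i + mu^-1 *: z)
  + mu * dot (w - mu^-1 *: z) (w - mu^-1 *: z).
Proof.
move=> mu_neq0; set a := fun i => Ablk Xs i *m submxcol u i.
have Gu : \mxrow_i Ablk Xs i *m u = \sum_i a i.
  by rewrite -{1}(submxcolK u) mul_mxrow_mxcol.
have Lu : dot u (\mxdiag_i (mu *: ((Ablk Xs i)^T *m Ablk Xs i)) *m u) =
          \sum_i mu * dot (a i) (a i).
  rewrite -[in LHS](submxcolK u) mul_mxdiag_mxcol dot_mxcol.
  apply: eq_bigr => i _.
  by rewrite -scalemxAl dotZr -mulmxA (dot_trmx (Ablk Xs i)^T) trmxK.
rewrite /MKmat /LambdaK dot_block dot_block Lu (dot_trmx (Gmat Xs)^T) trmxK.
rewrite /Gmat !mul_row_col Gu.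
rewrite !mul0mx !dot0r !dot_scalar_mx !mulNmx !mul1mx.
rewrite [in RHS](eq_bigr (fun i =>
    mu * dot (a i) (a i) + 2 * dot (a i) z + mu^-1 * dot z z)); last first.
  by move=> i _; rewrite !(dotDl, dotDr, dotZl, dotZr) (dotC z (a i)); field.
rewrite !big_split /= -!mulr_sumr -dot_suml sumr_const card_ord -mulr_natr.
rewrite !(dotDl, dotDr, dotNl, dotNr, dotZl, dotZr) (dotC z (\sum_i a i)) (dotC z w).
by field.
Qed.

Lemma psd_Mmat mu : 0 < mu -> psd (Mmat Xs mu).
Proof.
move=> mu_gt0; split=> [|v]; first exact: trmx_Mmat.
rewrite -[v]vsubmxK -[usubmx v]vsubmxK qf_dot Mmat_dot ?gt_eqF //.
by apply: addr_ge0; apply: mulr_dot_ge0; exact: ltW.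
Qed.

Lemma psd_MKmat mu : 0 < mu -> psd (MKmat Xs mu).
Proof.
move=> mu_gt0; split=> [|v]; first exact: trmx_MKmat.
rewrite -[v]vsubmxK -[usubmx v]vsubmxK qf_dot MKmat_dot ?gt_eqF //.
by apply: addr_ge0; first apply: sumr_ge0 => i _; apply: mulr_dot_ge0; exact: ltW.
Qed.

Lemma Mmat_ker mu y z : 0 < mu ->
  dot (col_mx (col_mx 0 y) z) (Mmat Xs mu *m col_mx (col_mx 0 y) z) = 0 ->
  y = 0 /\ z = 0.
Proof.
move=> mu_gt0; rewrite Mmat_dot ?gt_eqF // mulmx0 add0r => /eqP.
rewrite paddr_eq0 ?mulr_dot_ge0 ?ltW // !mulf_eq0 !dot_eq0 (gt_eqF mu_gt0) /=.
rewrite scaler_eq0 invr_eq0 (gt_eqF mu_gt0) /= => /andP[/eqP z0].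
by rewrite z0 scaler0 subr0 => /eqP.
Qed.

Lemma MKmat_ker mu w z : 0 < mu ->
  dot (col_mx (col_mx 0 w) z) (MKmat Xs mu *m col_mx (col_mx 0 w) z) = 0 ->
  w = 0 /\ z = 0.
Proof.
move=> mu_gt0; rewrite MKmat_dot ?gt_eqF //.
rewrite (eq_bigr (fun=> mu * dot (mu^-1 *: z) (mu^-1 *: z))); last first.
  by move=> i _; rewrite submxcol0 mulmx0 add0r.
rewrite sumr_const card_ord => /eqP.
rewrite paddr_eq0 ?mulrn_wge0 ?mulr_dot_ge0 ?ltW //.
rewrite mulrn_eq0 !mulf_eq0 !dot_eq0 scaler_eq0 invr_eq0 (gt_eqF mu_gt0) /=.
move=> /andP[Kz0 /eqP w_z]; suff z0 : z = 0 by move: w_z; rewrite z0 scaler0 subr0.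
have [//|/cV_neq0_coord[j _]] := eqVneq z 0; case/orP: Kz0 => [K0|/eqP//].
(* For K = 0 the vectors live in dimension \sum_(i < 0) pp i = 0, so z = 0 anyway. *)
by have := ltn_ord (tagnat.sig1 j); rewrite [X in (_ < X)%N](eqP K0).
Qed.

Lemma Hmat_Mmat mu eta :
  Hmat Xs mu eta = Mmat Xs mu + block_mx (block_mx (Smat Xs mu eta) 0 0 0) 0 0 0.
Proof. by rewrite /Hmat /Mmat /block3 !add_block_mx !addr0. Qed.

Lemma HKmat_MKmat mu etas :
  HKmat Xs mu etas =
  MKmat Xs mu + block_mx (block_mx (\mxdiag_i Sblk Xs mu etas i) 0 0 0) 0 0 0.
Proof. by rewrite /HKmat /MKmat /LambdaKt /LambdaK mxdiagD !add_block_mx !addr0. Qed.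

End BlockMatrices.

Theorem proposition1 (R : rcfType) (K n : nat) (pp : 'I_K -> nat)
  (Xs : forall i : 'I_K, 'M[R]_(n, pp i)) (mu eta : R) (etas : 'I_K -> R) :
  0 < mu ->
  (forall a : R, eigenvalue (mu *: ((Amat Xs)^T *m Amat Xs)) a -> a < eta) ->
  (forall (i : 'I_K) (a : R),
      eigenvalue (mu *: ((Ablk Xs i)^T *m Ablk Xs i)) a -> a < etas i) ->
  [/\ psd (Mmat Xs mu), psd (MKmat Xs mu), pd (Hmat Xs mu eta)
    & pd (HKmat Xs mu etas)].
Proof.
move=> mu_gt0 eta_gt etas_gt.
have S_pd : pd (Smat Xs mu eta) := pd_scalar_subr (trmx_scaled_gram _ _) eta_gt.
have Sblk_pd i : pd (Sblk Xs mu etas i).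
  exact: pd_scalar_subr (trmx_scaled_gram _ _) (etas_gt i).
split; [exact: psd_Mmat | exact: psd_MKmat | |].
- rewrite Hmat_Mmat; apply: pd_add_block_ul S_pd _; first exact: psd_Mmat.
  by move=> y z; apply: Mmat_ker.
- rewrite HKmat_MKmat; apply: pd_add_block_ul (pd_mxdiag Sblk_pd) _.
    exact: psd_MKmat.
  by move=> w z; apply: MKmat_ker.
Qed.
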